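(* Let $\mathcal D[t]\subset\mathcal H\subset\mathcal D^\times[t^\times]$ be a rigged Hilbert space with $\mathcal D[t]$ reflexive, and take $(X,\mu)=(\mathbb N,\gamma)$ with $\gamma$ the counting measure. Let $\omega:n\in\mathbb N\mapsto\omega_n\in\mathcal D^\times$ be a bounded Bessel distribution map (resp. a distribution frame). Then for each $n$ the conjugate linear functional $\omega_n$ is bounded with respect to the norm of $\mathcal H$, hence $\omega_n\in\mathcal H$, and $\{\omega_n\}_{n\in\mathbb N}$ is a Bessel sequence (resp. a frame) of $\mathcal H$, i.e. $\sum_n|\langle f,\omega_n\rangle|^2\le B\|f\|^2$ (resp. $A\|f\|^2\le\sum_n|\langle f,\omega_n\rangle|^2\le B\|f\|^2$) for all $f\in\mathcal H$, with the same bounds.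
   Context: A rigged Hilbert space $\mathcal D[t]\subset\mathcal H\subset\mathcal D^\times[t^\times]$: $\mathcal H$ is a Hilbert space with inner product $\langle\cdot,\cdot\rangle$ and norm $\|\cdot\|$; $\mathcal D$ is a dense subspace of $\mathcal H$ with a locally convex topology $t$ finer than the norm topology; $\mathcal D^\times$ is the space of continuous conjugate linear functionals on $\mathcal D[t]$ with the strong dual topology; $\mathcal H$ is identified with a subspace of $\mathcal D^\times$, and the duality pairing between $\mathcal D^\times$ and $\mathcal D$, also written $\langle\cdot,\cdot\rangle$, extends the inner product; $\langle f,F\rangle:=\overline{\langle F,f\rangle}$ for $f\in\mathcal D$, $F\in\mathcal D^\times$. A map $\omega:X\to\mathcal D^\times$ is weakly measurable if $x\mapsto\langle f,\omega_x\rangle$ is $\mu$-measurable for each $f\in\mathcal D$. It is a bounded Bessel distribution map if there is $B>0$ with $\int_X|\langle f,\omega_x\rangle|^2d\mu\le B\|f\|^2$ for all $f\in\mathcal D$; it is a distribution frame if additionally there is $A>0$ with $A\|f\|^2\le\int_X|\langle f,\omega_x\rangle|^2d\mu$ for all $f\in\mathcal D$. *)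

From Stdlib Require Import Reals List.
Open Scope R_scope.

Set Implicit Arguments.

Record Cx := mkC { re : R; im : R }.
Definition C0 : Cx := mkC 0 0.
Definition Cadd (a b : Cx) : Cx := mkC (re a + re b) (im a + im b).
Definition Cmul (a b : Cx) : Cx :=
  mkC (re a * re b - im a * im b) (re a * im b + im a * re b).
Definition Copp (a : Cx) : Cx := mkC (- re a) (- im a).
Definition Cconj (a : Cx) : Cx := mkC (re a) (- im a).
Definition Cmod (a : Cx) : R := sqrt (re a * re a + im a * im a).

(* inner product linear in the first argument, conjugate linear in the second *)
Record HilbertSpace := {
  hcar :> Type;
  hzero : hcar;
  hadd : hcar -> hcar -> hcar;
  hopp : hcar -> hcar;
  hscal : Cx -> hcar -> hcar;
  inner : hcar -> hcar -> Cx;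
  hadd_assoc : forall x y z, hadd x (hadd y z) = hadd (hadd x y) z;
  hadd_comm : forall x y, hadd x y = hadd y x;
  hadd_zero : forall x, hadd x hzero = x;
  hadd_opp : forall x, hadd x (hopp x) = hzero;
  hscal_one : forall x, hscal (mkC 1 0) x = x;
  hscal_assoc : forall a b x, hscal a (hscal b x) = hscal (Cmul a b) x;
  hscal_distr_v : forall a x y, hscal a (hadd x y) = hadd (hscal a x) (hscal a y);
  hscal_distr_s : forall a b x, hscal (Cadd a b) x = hadd (hscal a x) (hscal b x);
  inner_lin : forall a x y z,
      inner (hadd (hscal a x) y) z = Cadd (Cmul a (inner x z)) (inner y z);
  inner_sym : forall x y, inner y x = Cconj (inner x y);
  inner_real : forall x, im (inner x x) = 0;
  inner_pos : forall x, 0 <= re (inner x x);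
  inner_def : forall x, re (inner x x) = 0 -> x = hzero;
  hcomplete : forall u : nat -> hcar,
      (forall eps, 0 < eps -> exists N, forall m n, (N <= m)%nat -> (N <= n)%nat ->
          sqrt (re (inner (hadd (u m) (hopp (u n))) (hadd (u m) (hopp (u n))))) < eps) ->
      exists x, forall eps, 0 < eps -> exists N, forall n, (N <= n)%nat ->
          sqrt (re (inner (hadd (u n) (hopp x)) (hadd (u n) (hopp x)))) < eps
}.

Definition hnorm (H : HilbertSpace) (x : H) : R := sqrt (re (inner H x x)).
Definition hsub (H : HilbertSpace) (x y : H) : H := hadd H x (hopp H y).
Arguments hnorm {H} x.
Arguments hsub {H} x y.

(* D is a dense subspace of H, carrying the locally convex topology t
   generated by the family of seminorms (sn i)_{i : idx}; t is finer than the
   norm topology, i.e. the identity D[t] -> H is continuous. *)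
Record RiggedHilbertSpace (H : HilbertSpace) := {
  dom : H -> Prop;
  dom_zero : dom (hzero H);
  dom_add : forall f g, dom f -> dom g -> dom (hadd H f g);
  dom_scal : forall a f, dom f -> dom (hscal H a f);
  dom_dense : forall (x : H) eps, 0 < eps -> exists f, dom f /\ hnorm (hsub x f) < eps;
  idx : Type;
  sn : idx -> H -> R;
  sn_nonneg : forall i f, dom f -> 0 <= sn i f;
  sn_triangle : forall i f g, dom f -> dom g -> sn i (hadd H f g) <= sn i f + sn i g;
  sn_homog : forall i a f, dom f -> sn i (hscal H a f) = Cmod a * sn i f;
  t_finer : exists (F : list idx) (c : R), 0 < c /\
      forall f : H, dom f -> hnorm f <= c * fold_right (fun i m => Rmax (sn i f) m) 0 F
}.

Arguments dom {H} r _.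
Arguments sn {H} r _ _.

Definition maxsn (H : HilbertSpace) (D : RiggedHilbertSpace H) (F : list (idx D))
  (f : H) : R := fold_right (fun i m => Rmax (sn D i f) m) 0 F.

(* D^x : continuous conjugate linear functionals on D[t].  An element is
   represented by a function H -> Cx; only its values on D matter.  The pairing
   <F, f> is F f, and <f, F> = Cconj (F f). *)
Definition in_Dx (H : HilbertSpace) (D : RiggedHilbertSpace H) (phi : H -> Cx) : Prop :=
  (forall a b f g, dom D f -> dom D g ->
     phi (hadd H (hscal H a f) (hscal H b g)) =
     Cadd (Cmul (Cconj a) (phi f)) (Cmul (Cconj b) (phi g))) /\
  (exists (F : list (idx D)) (c : R), 0 <= c /\
     forall f, dom D f -> Cmod (phi f) <= c * maxsn D F f).

Definition bounded_D (H : HilbertSpace) (D : RiggedHilbertSpace H) (M : H -> Prop) : Prop :=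
  (forall f, M f -> dom D f) /\
  (forall i, exists c, forall f, M f -> sn D i f <= c).

(* bounded subsets of D^x for the strong dual topology beta(D^x, D), whose
   seminorms are q_M(phi) = sup_{f in M} |phi f|, M bounded in D *)
Definition bounded_Dx (H : HilbertSpace) (D : RiggedHilbertSpace H)
  (S : (H -> Cx) -> Prop) : Prop :=
  (forall phi, S phi -> in_Dx D phi) /\
  (forall M, bounded_D D M -> exists c, forall phi f, S phi -> M f -> Cmod (phi f) <= c).

(* Continuity: |Psi phi| <= c * q_M(phi) for some bounded M (finite unions of
   bounded sets are bounded); q_M(phi) <= s is written with its definition. *)
Definition in_Dxx (H : HilbertSpace) (D : RiggedHilbertSpace H)
  (Psi : (H -> Cx) -> Cx) : Prop :=
  (forall a b phi psi, in_Dx D phi -> in_Dx D psi ->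
     Psi (fun f => Cadd (Cmul a (phi f)) (Cmul b (psi f))) =
     Cadd (Cmul (Cconj a) (Psi phi)) (Cmul (Cconj b) (Psi psi))) /\
  (exists M c, bounded_D D M /\ 0 <= c /\
     forall phi s, in_Dx D phi -> 0 <= s -> (forall f, M f -> Cmod (phi f) <= s) ->
       Cmod (Psi phi) <= c * s).

(* D[t] reflexive: the canonical map J : D -> D^xx, (J f)(phi) = conj(phi f),
   is onto and is a topological isomorphism of D[t] onto D^xx with its strong
   topology beta(D^xx, D^x) (seminorms sup_{phi in S} |(J f) phi|, S strongly
   bounded in D^x). *)
Definition reflexive (H : HilbertSpace) (D : RiggedHilbertSpace H) : Prop :=
  (* J is onto D^xx *)
  (forall Psi, in_Dxx D Psi ->
     exists f, dom D f /\ forall phi, in_Dx D phi -> Psi phi = Cconj (phi f)) /\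
  (* J is continuous *)
  (forall S, bounded_Dx D S -> exists (F : list (idx D)) c, 0 <= c /\
     forall phi f, S phi -> dom D f -> Cmod (phi f) <= c * maxsn D F f) /\
  (* J^{-1} is continuous *)
  (forall i, exists S c, bounded_Dx D S /\ 0 <= c /\
     forall f s, dom D f -> 0 <= s -> (forall phi, S phi -> Cmod (phi f) <= s) ->
       sn D i f <= c * s).

Definition psum (u : nat -> R) (N : nat) : R := fold_right Rplus 0 (map u (seq 0 N)).

(* sum_n u n <= b  for nonnegative u (value in [0, +oo]) *)
Definition sum_le (u : nat -> R) (b : R) : Prop := forall N, psum u N <= b.
(* a <= sum_n u n  for nonnegative u (sum = sup of partial sums) *)
Definition le_sum (a : R) (u : nat -> R) : Prop :=
  forall eps, 0 < eps -> exists N, a - eps <= psum u N.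

Definition bounded_Bessel_map (H : HilbertSpace) (D : RiggedHilbertSpace H)
  (omega : nat -> H -> Cx) (B : R) : Prop :=
  (forall n, in_Dx D (omega n)) /\ 0 < B /\
  forall f, dom D f -> sum_le (fun n => Cmod (Cconj (omega n f)) ^ 2) (B * hnorm f ^ 2).

Definition distribution_frame (H : HilbertSpace) (D : RiggedHilbertSpace H)
  (omega : nat -> H -> Cx) (A B : R) : Prop :=
  bounded_Bessel_map D omega B /\ 0 < A /\
  forall f, dom D f -> le_sum (A * hnorm f ^ 2) (fun n => Cmod (Cconj (omega n f)) ^ 2).

Definition Bessel_seq (H : HilbertSpace) (h : nat -> H) (B : R) : Prop :=
  0 < B /\ forall f : H, sum_le (fun n => Cmod (inner H f (h n)) ^ 2) (B * hnorm f ^ 2).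

Arguments Bessel_seq {H} h B.
Definition frame_seq (H : HilbertSpace) (h : nat -> H) (A B : R) : Prop :=
  Bessel_seq h B /\ 0 < A /\
  forall f : H, le_sum (A * hnorm f ^ 2) (fun n => Cmod (inner H f (h n)) ^ 2).

(* omega_n is the functional induced by h_n in H (H embedded in D^x via
   h |-> <h, .>), and omega_n is bounded w.r.t. the norm of H *)
Arguments frame_seq {H} h A B.
Definition represented_in_H (H : HilbertSpace) (D : RiggedHilbertSpace H)
  (omega : nat -> H -> Cx) (h : nat -> H) : Prop :=
  forall n, (exists c, forall f, dom D f -> Cmod (omega n f) <= c * hnorm f) /\
            (forall f, dom D f -> omega n f = inner H (h n) f).

From Stdlib Require Import Reals List Lra Psatz ClassicalEpsilon.
Open Scope R_scope.

(* The Bessel bound makes each [omega n] a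
   norm-bounded conjugate linear functional on [D]; it is represented by the
   minimizer [h n] of [|x|^2 - 2 Re omega_n(x)] over [D], which exists by the
   parallelogram law and completeness of [H].  Both frame inequalities then pass
   from [D] to [H] because finite sums of [|<f, h n>|^2], their supremum and
   [|f|^2] all satisfy [F(x) <= (1 + eta) F(y) + (1 + 1/eta) F(x - y)], which
   makes them continuous. *)

Lemma Cx_eq (a b : Cx) : re a = re b -> im a = im b -> a = b.
Proof. destruct a, b; simpl; intros -> ->; reflexivity. Qed.

Definition sq (z : Cx) : R := re z * re z + im z * im z.

Lemma sq_nonneg (z : Cx) : 0 <= sq z.
Proof. unfold sq; nra. Qed.

Lemma Cmod_sq (z : Cx) : Cmod z ^ 2 = sq z.
Proof. unfold Cmod; rewrite pow2_sqrt; [reflexivity | apply sq_nonneg]. Qed.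

Lemma sq_Cconj (z : Cx) : sq (Cconj z) = sq z.
Proof. unfold sq; simpl; ring. Qed.

Lemma quadratic_nonneg_discr (k b Q : R) : 0 <= Q ->
  (forall t, 0 <= k + 2 * t * b + t * t * Q) -> b * b <= k * Q.
Proof.
  intros HQ Ht.
  assert (Hk : 0 <= k) by (specialize (Ht 0); lra).
  destruct (Rle_lt_or_eq_dec 0 Q HQ) as [HQp | <-].
  - specialize (Ht (- b / Q)).
    replace (k + 2 * (- b / Q) * b + - b / Q * (- b / Q) * Q) with (k - b * b / Q) in Ht
      by (field; lra).
    apply (Rmult_le_compat_r Q) in Ht; [|lra].
    replace ((k - b * b / Q) * Q) with (k * Q - b * b) in Ht by (field; lra). lra.
  - destruct (Req_dec b 0) as [-> | Hb]; [lra|].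
    specialize (Ht (- (k + 1) / (2 * b))).
    replace (k + 2 * (- (k + 1) / (2 * b)) * b + - (k + 1) / (2 * b) * (- (k + 1) / (2 * b)) * 0)
      with (-1) in Ht by (field; lra). lra.
Qed.

Definition normsq {H : HilbertSpace} (x : H) : R := re (inner H x x).

Section InnerProduct.

Variable H : HilbertSpace.
Implicit Types x y z : H.

Lemma inner_zero_l z : inner H (hzero H) z = C0.
Proof.
  pose proof (inner_lin H (mkC 1 0) (hzero H) (hzero H) z) as E.
  rewrite hscal_one, hadd_zero in E.
  apply (f_equal re) in E as Ere; apply (f_equal im) in E as Eim; simpl in Ere, Eim.
  apply Cx_eq; simpl; lra.
Qed.

Lemma inner_add_l x y z : inner H (hadd H x y) z = Cadd (inner H x z) (inner H y z).
Proof.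
  pose proof (inner_lin H (mkC 1 0) x y z) as E. rewrite hscal_one in E. rewrite E.
  apply Cx_eq; simpl; ring.
Qed.

Lemma inner_scal_l a x z : inner H (hscal H a x) z = Cmul a (inner H x z).
Proof.
  pose proof (inner_lin H a x (hzero H) z) as E. rewrite hadd_zero, inner_zero_l in E.
  rewrite E. apply Cx_eq; simpl; ring.
Qed.

Lemma inner_opp_l x z : inner H (hopp H x) z = Copp (inner H x z).
Proof.
  pose proof (inner_add_l x (hopp H x) z) as E. rewrite hadd_opp, inner_zero_l in E.
  apply (f_equal re) in E as Ere; apply (f_equal im) in E as Eim; simpl in Ere, Eim.
  apply Cx_eq; simpl; lra.
Qed.

Lemma re_inner_sym x y : re (inner H y x) = re (inner H x y).
Proof. rewrite inner_sym; reflexivity. Qed.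

Lemma im_inner_sym x y : im (inner H y x) = - im (inner H x y).
Proof. rewrite inner_sym; reflexivity. Qed.

Lemma re_inner_add_l x y z : re (inner H (hadd H x y) z) = re (inner H x z) + re (inner H y z).
Proof. rewrite inner_add_l; reflexivity. Qed.
Lemma im_inner_add_l x y z : im (inner H (hadd H x y) z) = im (inner H x z) + im (inner H y z).
Proof. rewrite inner_add_l; reflexivity. Qed.
Lemma re_inner_scal_l a x z :
  re (inner H (hscal H a x) z) = re a * re (inner H x z) - im a * im (inner H x z).
Proof. rewrite inner_scal_l; reflexivity. Qed.
Lemma im_inner_scal_l a x z :
  im (inner H (hscal H a x) z) = re a * im (inner H x z) + im a * re (inner H x z).
Proof. rewrite inner_scal_l; reflexivity. Qed.
Lemma re_inner_opp_l x z : re (inner H (hopp H x) z) = - re (inner H x z).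
Proof. rewrite inner_opp_l; reflexivity. Qed.
Lemma im_inner_opp_l x z : im (inner H (hopp H x) z) = - im (inner H x z).
Proof. rewrite inner_opp_l; reflexivity. Qed.

Lemma re_inner_add_r x y z : re (inner H z (hadd H x y)) = re (inner H z x) + re (inner H z y).
Proof. rewrite !(re_inner_sym _ z). apply re_inner_add_l. Qed.
Lemma im_inner_add_r x y z : im (inner H z (hadd H x y)) = im (inner H z x) + im (inner H z y).
Proof. rewrite !(im_inner_sym _ z), im_inner_add_l. ring. Qed.
Lemma re_inner_scal_r a x z :
  re (inner H z (hscal H a x)) = re a * re (inner H z x) + im a * im (inner H z x).
Proof. rewrite re_inner_sym, re_inner_scal_l, (re_inner_sym x), (im_inner_sym z). ring. Qed.
Lemma im_inner_scal_r a x z :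
  im (inner H z (hscal H a x)) = re a * im (inner H z x) - im a * re (inner H z x).
Proof. rewrite im_inner_sym, im_inner_scal_l, (re_inner_sym x), (im_inner_sym z). ring. Qed.
Lemma re_inner_opp_r x z : re (inner H z (hopp H x)) = - re (inner H z x).
Proof. rewrite !(re_inner_sym _ z). apply re_inner_opp_l. Qed.
Lemma im_inner_opp_r x z : im (inner H z (hopp H x)) = - im (inner H z x).
Proof. rewrite !(im_inner_sym _ z), im_inner_opp_l. ring. Qed.

End InnerProduct.

Global Hint Rewrite re_inner_add_l im_inner_add_l re_inner_scal_l im_inner_scal_l
  re_inner_opp_l im_inner_opp_l re_inner_add_r im_inner_add_r re_inner_scal_r
  im_inner_scal_r re_inner_opp_r im_inner_opp_r : inner_expand.

Ltac inner_expand :=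
  unfold normsq, hsub in *; autorewrite with inner_expand in *; simpl re in *; simpl im in *.

Section Norm.

Variable H : HilbertSpace.
Implicit Types x y : H.

Lemma normsq_nonneg x : 0 <= normsq x.
Proof. apply inner_pos. Qed.

Lemma hnorm_sq x : hnorm x ^ 2 = normsq x.
Proof. apply pow2_sqrt, inner_pos. Qed.

Lemma normsq_hsub_sym x y : normsq (hsub x y) = normsq (hsub y x).
Proof. inner_expand. rewrite (re_inner_sym H x y). ring. Qed.

Lemma cauchy_schwarz x y : sq (inner H x y) <= normsq x * normsq y.
Proof.
  set (z := inner H x y).
  destruct (Req_dec (sq z) 0) as [Hz | Hz].
  { rewrite Hz. apply Rmult_le_pos; apply normsq_nonneg. }
  assert (Hzp : 0 < sq z) by (pose proof (sq_nonneg z); lra).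
  enough (- sq z * - sq z <= normsq x * (sq z * normsq y)) by nra.
  apply quadratic_nonneg_discr;
    [apply Rmult_le_pos; [lra | apply normsq_nonneg]|].
  intros t.
  pose proof (inner_pos H (hadd H x (hscal H (mkC (- t * re z) (- t * im z)) y))) as P.
  inner_expand. rewrite (re_inner_sym H x y), (im_inner_sym H x y), (inner_real H y) in P.
  fold z in P. unfold sq. nra.
Qed.

Lemma re_inner_sq_le x y : re (inner H x y) * re (inner H x y) <= normsq x * normsq y.
Proof. pose proof (cauchy_schwarz x y) as C. unfold sq in C. nra. Qed.

End Norm.

Lemma two_mul_le_weighted (r a b eta : R) : r * r <= a * b -> 0 <= a -> 0 <= b -> 0 < eta ->
  2 * r <= eta * a + b / eta.
Proof.
  intros Hr Ha Hb He.
  apply (Rmult_le_reg_r eta); [exact He|].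
  replace ((eta * a + b / eta) * eta) with (eta * eta * a + b) by (field; lra).
  destruct (Rle_lt_or_eq_dec 0 a Ha) as [Hap | <-]; [|nra].
  apply (Rmult_le_reg_l a); [exact Hap|].
  pose proof (Rle_0_sqr (a * eta - r)). unfold Rsqr in *. nra.
Qed.

Definition approx_subadditive {H : HilbertSpace} (Phi : H -> R) : Prop :=
  forall x y eta, 0 < eta -> Phi x <= (1 + eta) * Phi y + (1 + / eta) * Phi (hsub x y).

Lemma normsq_approx_subadditive (H : HilbertSpace) : approx_subadditive (@normsq H).
Proof.
  intros x y eta He.
  pose proof (two_mul_le_weighted _ _ _ _ (re_inner_sq_le H y (hsub x y))
    (normsq_nonneg H y) (normsq_nonneg H (hsub x y)) He) as P.
  inner_expand. rewrite (re_inner_sym H x y) in *. unfold Rdiv in P. nra.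
Qed.

Lemma approx_subadditive_scale (H : HilbertSpace) (Phi : H -> R) (c : R) : 0 <= c ->
  approx_subadditive Phi -> approx_subadditive (fun x => c * Phi x).
Proof.
  intros Hc HPhi x y eta He.
  specialize (HPhi x y eta He). apply (Rmult_le_compat_l c) in HPhi; [lra | exact Hc].
Qed.

Lemma sq_Cadd_le (z w : Cx) (eta : R) : 0 < eta ->
  sq (Cadd z w) <= (1 + eta) * sq z + (1 + / eta) * sq w.
Proof.
  intros He.
  assert (Hzw : (re z * re w + im z * im w) * (re z * re w + im z * im w) <= sq z * sq w).
  { unfold sq. pose proof (Rle_0_sqr (re z * im w - im z * re w)). unfold Rsqr in *. nra. }
  pose proof (two_mul_le_weighted _ _ _ _ Hzw (sq_nonneg z) (sq_nonneg w) He) as P.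
  unfold Rdiv in P. unfold sq in *; simpl. nra.
Qed.

Lemma psum_S (u : nat -> R) N : psum u (S N) = psum u N + u N.
Proof.
  unfold psum. rewrite seq_S, map_app, fold_right_app. simpl.
  generalize (u N). induction (map u (seq 0 N)) as [|x l IH]; intros c; simpl.
  - ring.
  - rewrite IH. ring.
Qed.

Lemma psum_0 (u : nat -> R) : psum u 0 = 0.
Proof. reflexivity. Qed.

Lemma psum_le (u v : nat -> R) N : (forall n, u n <= v n) -> psum u N <= psum v N.
Proof. intros Huv. induction N; [rewrite !psum_0; lra|]. rewrite !psum_S. specialize (Huv N). lra. Qed.

Lemma psum_ext (u v : nat -> R) N : (forall n, u n = v n) -> psum u N = psum v N.
Proof. intros E. induction N; [reflexivity|]. rewrite !psum_S, IHN, E. reflexivity. Qed.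

Lemma psum_nonneg (u : nat -> R) N : (forall n, 0 <= u n) -> 0 <= psum u N.
Proof. intros Hu. induction N; [rewrite !psum_0; lra|]. rewrite psum_S. specialize (Hu N). lra. Qed.

Lemma psum_lin (a b : R) (u v : nat -> R) N :
  psum (fun n => a * u n + b * v n) N = a * psum u N + b * psum v N.
Proof. induction N; [rewrite !psum_0; ring|]. rewrite !psum_S, IHN. ring. Qed.

Lemma sum_le_ext (u v : nat -> R) (b : R) : (forall n, u n = v n) -> sum_le u b -> sum_le v b.
Proof. intros E Hu N. rewrite <- (psum_ext u v N E). apply Hu. Qed.

Lemma le_sum_ext (u v : nat -> R) (a : R) : (forall n, u n = v n) -> le_sum a u -> le_sum a v.
Proof.
  intros E Hu eps He. destruct (Hu eps He) as [N HN]. exists N.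
  rewrite <- (psum_ext u v N E). exact HN.
Qed.

Lemma psum_scal (a : R) (u : nat -> R) N : psum (fun n => a * u n) N = a * psum u N.
Proof. induction N; [rewrite !psum_0; ring|]. rewrite !psum_S, IHN. ring. Qed.

Lemma term_le_psum (u : nat -> R) n : (forall m, 0 <= u m) -> u n <= psum u (S n).
Proof. intros Hu. rewrite psum_S. pose proof (psum_nonneg u n Hu). lra. Qed.

(* An arbitrary real when the partial sums of [u] are unbounded. *)
Definition psum_lub (u : nat -> R) : R :=
  epsilon (inhabits 0) (is_lub (fun r => exists N, r = psum u N)).

Lemma psum_lub_spec (u : nat -> R) (b : R) : sum_le u b ->
  is_lub (fun r => exists N, r = psum u N) (psum_lub u).
Proof.
  intros Hb. unfold psum_lub. apply epsilon_spec.
  destruct (completeness (fun r => exists N, r = psum u N)) as [m Hm].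
  - exists b. intros r [N ->]. apply Hb.
  - exists (psum u 0), 0%nat. reflexivity.
  - exists m. exact Hm.
Qed.

Lemma psum_le_lub (u : nat -> R) b N : sum_le u b -> psum u N <= psum_lub u.
Proof. intros Hb. apply (proj1 (psum_lub_spec u b Hb)). exists N. reflexivity. Qed.

Lemma psum_lub_le (u : nat -> R) b : sum_le u b -> psum_lub u <= b.
Proof. intros Hb. apply (proj2 (psum_lub_spec u b Hb)). intros r [N ->]. apply Hb. Qed.

Lemma le_psum_lub (u : nat -> R) a b : sum_le u b -> le_sum a u -> a <= psum_lub u.
Proof.
  intros Hb Ha. apply Rle_plus_epsilon. intros eps He.
  destruct (Ha eps He) as [N HN]. pose proof (psum_le_lub u b N Hb). lra.
Qed.

Lemma le_sum_of_le_psum_lub (u : nat -> R) a b : sum_le u b -> a <= psum_lub u -> le_sum a u.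
Proof.
  intros Hb Ha eps He.
  destruct (classic (exists N, psum_lub u - eps <= psum u N)) as [[N HN] | Hno].
  - exists N. lra.
  - enough (psum_lub u <= psum_lub u - eps) by lra.
    apply (proj2 (psum_lub_spec u b Hb)). intros r [N ->].
    destruct (Rle_lt_dec (psum_lub u - eps) (psum u N)); [exfalso; eauto | lra].
Qed.

Lemma psum_lub_le_comb (u v w : nat -> R) (alpha beta bv bw : R) :
  0 <= alpha -> 0 <= beta -> sum_le v bv -> sum_le w bw ->
  (forall n, u n <= alpha * v n + beta * w n) ->
  psum_lub u <= alpha * psum_lub v + beta * psum_lub w.
Proof.
  intros Ha Hb Hv Hw Huvw.
  assert (Hu : forall N, psum u N <= alpha * psum_lub v + beta * psum_lub w).
  { intros N. eapply Rle_trans; [apply (psum_le _ _ N Huvw)|]. rewrite psum_lin.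
    pose proof (psum_le_lub v bv N Hv); pose proof (psum_le_lub w bw N Hw). nra. }
  apply (psum_lub_le u). exact Hu.
Qed.

Lemma le_of_forall_le_add_mul (a b M : R) : (forall d, 0 < d -> a <= b + M * d) -> a <= b.
Proof.
  intros Hd. apply Rle_plus_epsilon. intros eps He.
  destruct (Rle_lt_dec M 0) as [HM | HM].
  - specialize (Hd 1 Rlt_0_1). lra.
  - specialize (Hd (eps / M) (Rdiv_lt_0_compat _ _ He HM)).
    replace (M * (eps / M)) with eps in Hd by (field; lra). exact Hd.
Qed.

Lemma le_of_forall_le_sqr_mul (a b : R) :
  (forall eta, 0 < eta -> a <= (1 + eta) * (1 + eta) * b) -> a <= b.
Proof.
  intros Heta. destruct (Rle_lt_dec b 0) as [Hb | Hb].
  - specialize (Heta 1 Rlt_0_1). lra.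
  - apply (le_of_forall_le_add_mul _ _ (3 * b)). intros d Hd.
    set (eta := Rmin d 1).
    assert (He : 0 < eta) by (apply Rmin_pos; lra).
    assert (He1 : eta <= 1) by apply Rmin_r.
    assert (Hed : eta <= d) by apply Rmin_l.
    assert (eta * (2 + eta) <= 3 * d) by nra.
    assert (eta * (2 + eta) * b <= 3 * d * b) by (apply Rmult_le_compat_r; lra).
    specialize (Heta eta He). nra.
Qed.

Lemma dense_normsq {H : HilbertSpace} (D : RiggedHilbertSpace H) (x : H) (d : R) : 0 < d ->
  exists g, dom D g /\ normsq (hsub x g) < d.
Proof.
  intros Hd. destruct (dom_dense D x (sqrt_lt_R0 _ Hd)) as [g [Hg Hn]].
  exists g. split; [exact Hg|]. rewrite <- hnorm_sq.
  assert (0 <= hnorm (hsub x g)) by apply sqrt_pos.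
  pose proof (sqrt_sqrt d (Rlt_le _ _ Hd)).
  assert (hnorm (hsub x g) * hnorm (hsub x g) < sqrt d * sqrt d)
    by (apply Rmult_le_0_lt_compat; lra).
  simpl. lra.
Qed.

Section DenseExtension.

Variables (H : HilbertSpace) (D : RiggedHilbertSpace H) (Phi Psi : H -> R) (K : R).
Hypotheses (Phi_approx : approx_subadditive Phi) (Psi_approx : approx_subadditive Psi)
  (K_nonneg : 0 <= K)
  (Phi_bound : forall x, Phi x <= K * normsq x) (Psi_bound : forall x, Psi x <= K * normsq x)
  (Phi_le_Psi : forall g, dom D g -> Phi g <= Psi g).

Lemma le_of_le_on_dense (f : H) : Phi f <= Psi f.
Proof.
  (* Via [g] in [D] with [|f - g|^2 < d]: [Phi f <= (1 + eta)^2 Psi f + O(d)]. *)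
  apply le_of_forall_le_sqr_mul. intros eta He.
  set (c := 1 + / eta).
  assert (Hc : 0 <= c) by (pose proof (Rinv_0_lt_compat _ He); unfold c; lra).
  apply (le_of_forall_le_add_mul _ _ ((1 + eta) * c * K + c * K)). intros d Hd.
  destruct (dense_normsq D f d Hd) as [g [Dg Hfg]].
  assert (Hgf : K * normsq (hsub g f) <= K * d).
  { rewrite <- normsq_hsub_sym. apply Rmult_le_compat_l; lra. }
  pose proof (Phi_approx f g eta He) as Pf. fold c in Pf.
  pose proof (Psi_approx g f eta He) as Pg. fold c in Pg.
  pose proof (Phi_bound (hsub f g)) as Bf. pose proof (Psi_bound (hsub g f)) as Bg.
  pose proof (Phi_le_Psi g Dg) as Hg.
  assert (Hfg' : K * normsq (hsub f g) <= K * d) by (apply Rmult_le_compat_l; lra).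
  assert (c * Phi (hsub f g) <= c * (K * d)) by (apply Rmult_le_compat_l; lra).
  assert (c * Psi (hsub g f) <= c * (K * d)) by (apply Rmult_le_compat_l; lra).
  assert ((1 + eta) * Phi g <= (1 + eta) * ((1 + eta) * Psi f + c * (K * d)))
    by (apply Rmult_le_compat_l; lra).
  lra.
Qed.

End DenseExtension.

Lemma inv_succ_eventually_lt (e : R) : 0 < e ->
  exists N, forall n, (N <= n)%nat -> / INR (S n) < e.
Proof.
  intros He. destruct (archimed_cor1 e He) as [N [HN HN0]]. exists N.
  intros n Hn. eapply Rle_lt_trans; [|exact HN].
  apply Rinv_le_contravar; [apply lt_0_INR; exact HN0 | apply le_INR; lia].
Qed.

Lemma minimizing_sequence {T : Type} (P : T -> Prop) (J : T -> R) (lb : R) :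
  (exists x, P x) -> (forall x, P x -> lb <= J x) ->
  exists (m : R) (xs : nat -> T), (forall x, P x -> m <= J x) /\
    forall k, P (xs k) /\ J (xs k) <= m + / INR (S k).
Proof.
  intros [x0 Hx0] Hlb.
  set (E := fun r => exists x, P x /\ r = - J x).
  destruct (completeness E) as [L [L_ub L_least]].
  - exists (- lb). intros r [x [Hx ->]]. specialize (Hlb x Hx). lra.
  - exists (- J x0), x0. split; [exact Hx0 | reflexivity].
  - assert (Hm : forall x, P x -> - L <= J x).
    { intros x Hx. assert (E (- J x)) as HE by (exists x; split; [exact Hx | reflexivity]).
      specialize (L_ub _ HE). lra. }
    assert (Hk : forall k, exists x, P x /\ J x <= - L + / INR (S k)).
    { intros k. apply NNPP. intros Hno.
      assert (Hpos : 0 < / INR (S k)) by (apply Rinv_0_lt_compat, lt_0_INR; lia).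
      enough (L <= L - / INR (S k)) by lra.
      apply L_least. intros r [x [Hx ->]].
      destruct (Rle_lt_dec (J x) (- L + / INR (S k))); [exfalso; eauto | lra]. }
    exists (- L), (fun k => proj1_sig (constructive_indefinite_description _ (Hk k))).
    split; [exact Hm|]. intros k. apply proj2_sig.
Qed.

Definition converges_to {H : HilbertSpace} (xs : nat -> H) (h : H) : Prop :=
  forall d, 0 < d -> exists N, forall n, (N <= n)%nat -> normsq (hsub (xs n) h) < d.

Lemma normsq_lt_of_hnorm_lt {H : HilbertSpace} (x : H) (d : R) : 0 < d ->
  sqrt (normsq x) < sqrt d -> normsq x < d.
Proof.
  intros Hd Hx. rewrite <- (sqrt_sqrt (normsq x)), <- (sqrt_sqrt d) by (apply normsq_nonneg || lra).
  apply Rmult_le_0_lt_compat; try apply sqrt_pos; exact Hx.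
Qed.

Lemma limit_of_normsq_cauchy {H : HilbertSpace} (xs : nat -> H) (C : R) : 0 <= C ->
  (forall k l, normsq (hsub (xs k) (xs l)) <= C * (/ INR (S k) + / INR (S l))) ->
  exists h : H, converges_to xs h.
Proof.
  intros HC Hcau. destruct (hcomplete H xs) as [h Hh].
  - intros eps He.
    assert (He2 : 0 < eps * eps / (2 * C + 1)) by (apply Rdiv_lt_0_compat; nra).
    destruct (inv_succ_eventually_lt _ He2) as [N HN]. exists N. intros m n Hm Hn.
    rewrite <- (sqrt_square eps) by lra. apply sqrt_lt_1_alt. split; [apply normsq_nonneg|].
    eapply Rle_lt_trans; [apply (Hcau m n)|].
    specialize (HN m Hm) as Hm'. specialize (HN n Hn) as Hn'.
    apply (Rle_lt_trans _ (C * (2 * (eps * eps / (2 * C + 1))))); [apply Rmult_le_compat_l; lra|].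
    apply (Rmult_lt_reg_r (2 * C + 1)); [lra|].
    replace (C * (2 * (eps * eps / (2 * C + 1))) * (2 * C + 1)) with (2 * C * (eps * eps))
      by (field; lra). nra.
  - exists h. intros d Hd. destruct (Hh (sqrt d) (sqrt_lt_R0 _ Hd)) as [N HN].
    exists N. intros n Hn. apply normsq_lt_of_hnorm_lt; [exact Hd | exact (HN n Hn)].
Qed.

Definition conj_linear_on {H : HilbertSpace} (D : RiggedHilbertSpace H) (phi : H -> Cx) : Prop :=
  forall a b f g, dom D f -> dom D g ->
    phi (hadd H (hscal H a f) (hscal H b g)) =
    Cadd (Cmul (Cconj a) (phi f)) (Cmul (Cconj b) (phi g)).

Definition riesz_energy {H : HilbertSpace} (phi : H -> Cx) (x : H) : R :=
  normsq x - 2 * re (phi x).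

Section Riesz.

Variables (H : HilbertSpace) (D : RiggedHilbertSpace H) (phi : H -> Cx) (c : R).
Hypotheses (phi_conj_linear : conj_linear_on D phi) (c_nonneg : 0 <= c)
  (phi_bounded : forall f, dom D f -> sq (phi f) <= c * normsq f).

Lemma conj_linear_scal a f : dom D f -> phi (hscal H a f) = Cmul (Cconj a) (phi f).
Proof.
  intros Hf. pose proof (phi_conj_linear a C0 f f Hf Hf) as E.
  rewrite <- hscal_distr_s in E.
  replace (Cadd a C0) with a in E by (apply Cx_eq; simpl; ring).
  rewrite E. apply Cx_eq; simpl; ring.
Qed.

Lemma conj_linear_add f g : dom D f -> dom D g -> phi (hadd H f g) = Cadd (phi f) (phi g).
Proof.
  intros Hf Hg. pose proof (phi_conj_linear (mkC 1 0) (mkC 1 0) f g Hf Hg) as E.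
  rewrite !hscal_one in E. rewrite E. apply Cx_eq; simpl; ring.
Qed.

Lemma riesz_energy_bounded_below x : dom D x -> - c <= riesz_energy phi x.
Proof.
  intros Hx. unfold riesz_energy.
  assert (Hre : re (phi x) * re (phi x) <= normsq x * c)
    by (pose proof (phi_bounded x Hx); unfold sq in *; nra).
  pose proof (two_mul_le_weighted _ _ _ _ Hre (normsq_nonneg H x) c_nonneg Rlt_0_1). lra.
Qed.

Lemma riesz_energy_midpoint x y : dom D x -> dom D y ->
  riesz_energy phi x + riesz_energy phi y
  - 2 * riesz_energy phi (hscal H (mkC (/ 2) 0) (hadd H x y)) = normsq (hsub x y) / 2.
Proof.
  intros Hx Hy. unfold riesz_energy.
  rewrite (conj_linear_scal _ _ (dom_add D _ _ Hx Hy)), (conj_linear_add _ _ Hx Hy).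
  inner_expand. rewrite (re_inner_sym H x y), (im_inner_sym H x y). field.
Qed.

Lemma riesz_energy_shift x f (t : R) : dom D x -> dom D f ->
  riesz_energy phi (hadd H x (hscal H (mkC t 0) f)) =
  riesz_energy phi x + 2 * t * (re (inner H x f) - re (phi f)) + t * t * normsq f.
Proof.
  intros Hx Hf. unfold riesz_energy.
  rewrite (conj_linear_add _ _ Hx (dom_scal D _ _ Hf)), (conj_linear_scal _ _ Hf).
  inner_expand. rewrite (re_inner_sym H x f), (inner_real H f). ring.
Qed.

Lemma riesz_minimizing_sequence :
  exists (m : R) (h : H) (xs : nat -> H),
    (forall x, dom D x -> m <= riesz_energy phi x) /\
    (forall k, dom D (xs k) /\ riesz_energy phi (xs k) <= m + / INR (S k)) /\
    converges_to xs h.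
Proof.
  destruct (minimizing_sequence (dom D) (riesz_energy phi) (- c))
    as [m [xs [Hmin Hxs]]].
  - exists (hzero H). apply dom_zero.
  - apply riesz_energy_bounded_below.
  - destruct (limit_of_normsq_cauchy xs 2) as [h Hh]; [lra| |].
    + intros k l. destruct (Hxs k) as [Dk Ek]. destruct (Hxs l) as [Dl El].
      pose proof (riesz_energy_midpoint _ _ Dk Dl) as Mid.
      pose proof (Hmin _ (dom_scal D (mkC (/ 2) 0) _ (dom_add D _ _ Dk Dl))). lra.
    + exists m, h, xs. auto.
Qed.

(* Euler-Lagrange equation of the minimization, with [h] the limit of the minimizing sequence. *)
Lemma riesz_re_inner (m : R) (h : H) (xs : nat -> H) :
  (forall x, dom D x -> m <= riesz_energy phi x) ->
  (forall k, dom D (xs k) /\ riesz_energy phi (xs k) <= m + / INR (S k)) ->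
  converges_to xs h ->
  forall f, dom D f -> re (inner H h f) = re (phi f).
Proof.
  intros Hmin Hxs Hconv f Hf.
  set (d := re (inner H h f) - re (phi f)).
  assert (Hk : forall k, d * d <= 2 * normsq f * (/ INR (S k) + normsq (hsub (xs k) h))).
  { intros k. destruct (Hxs k) as [Dk Ek].
    set (e := re (inner H (hsub (xs k) h) f)).
    assert (Hde : re (inner H (xs k) f) - re (phi f) = d + e) by (unfold d, e; inner_expand; ring).
    assert (Hb : (d + e) * (d + e) <= / INR (S k) * normsq f).
    { apply quadratic_nonneg_discr; [apply normsq_nonneg|]. intros t.
      pose proof (Hmin _ (dom_add D _ _ Dk (dom_scal D (mkC t 0) _ Hf))) as Ht.
      rewrite riesz_energy_shift, Hde in Ht by assumption. lra. }
    pose proof (re_inner_sq_le H (hsub (xs k) h) f) as He. fold e in He.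
    pose proof (Rle_0_sqr (d + 2 * e)). unfold Rsqr in *. nra. }
  assert (Hd2 : d * d <= 0).
  { apply (le_of_forall_le_add_mul _ _ (2 * normsq f)). intros delta Hdelta.
    destruct (Hconv (delta / 2)) as [N1 HN1]; [lra|].
    destruct (inv_succ_eventually_lt (delta / 2)) as [N2 HN2]; [lra|].
    specialize (Hk (Nat.max N1 N2)). specialize (HN1 (Nat.max N1 N2) (Nat.le_max_l _ _)).
    specialize (HN2 (Nat.max N1 N2) (Nat.le_max_r _ _)).
    pose proof (normsq_nonneg H f).
    assert (2 * normsq f * (/ INR (S (Nat.max N1 N2)) + normsq (hsub (xs (Nat.max N1 N2)) h))
            <= 2 * normsq f * delta) by (apply Rmult_le_compat_l; lra).
    lra. }
  assert (d = 0) by nra. unfold d in *. lra.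
Qed.

Lemma riesz_representation : exists h : H, forall f, dom D f -> phi f = inner H h f.
Proof.
  destruct riesz_minimizing_sequence as [m [h [xs [Hmin [Hxs Hconv]]]]].
  pose proof (riesz_re_inner m h xs Hmin Hxs Hconv) as Hre.
  exists h. intros f Hf. apply Cx_eq.
  - symmetry. exact (Hre f Hf).
  - (* Imaginary parts: apply the real-part identity to [i f]. *)
    pose proof (Hre _ (dom_scal D (mkC 0 1) _ Hf)) as Him.
    rewrite (conj_linear_scal _ _ Hf) in Him. inner_expand. lra.
Qed.

End Riesz.

Definition coef_sq {H : HilbertSpace} (h : nat -> H) (x : H) (n : nat) : R :=
  sq (inner H x (h n)).

Section Coefficients.

Variables (H : HilbertSpace) (h : nat -> H).

Lemma coef_sq_approx x y eta n : 0 < eta ->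
  coef_sq h x n <= (1 + eta) * coef_sq h y n + (1 + / eta) * coef_sq h (hsub x y) n.
Proof.
  intros He. unfold coef_sq.
  replace (inner H x (h n)) with (Cadd (inner H y (h n)) (inner H (hsub x y) (h n))).
  - apply sq_Cadd_le, He.
  - apply Cx_eq; simpl; inner_expand; ring.
Qed.

Lemma psum_coef_sq_approx_subadditive N : approx_subadditive (fun x => psum (coef_sq h x) N).
Proof.
  intros x y eta He. rewrite <- psum_lin. apply psum_le. intros n. apply coef_sq_approx, He.
Qed.

Lemma psum_coef_sq_le x N : psum (coef_sq h x) N <= psum (fun n => normsq (h n)) N * normsq x.
Proof.
  rewrite Rmult_comm, <- psum_scal. apply psum_le. intros n. apply cauchy_schwarz.
Qed.

Variables (D : RiggedHilbertSpace H) (B : R).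
Hypothesis B_nonneg : 0 <= B.

Lemma bessel_of_bessel_on_dense :
  (forall g, dom D g -> sum_le (coef_sq h g) (B * normsq g)) ->
  forall f, sum_le (coef_sq h f) (B * normsq f).
Proof.
  intros Hdense f N.
  set (C := psum (fun n => normsq (h n)) N).
  assert (HC : 0 <= C) by (apply psum_nonneg; intros; apply normsq_nonneg).
  apply (le_of_le_on_dense _ D (fun x => psum (coef_sq h x) N) (fun x => B * normsq x) (B + C)).
  - apply psum_coef_sq_approx_subadditive.
  - apply approx_subadditive_scale; [exact B_nonneg | apply normsq_approx_subadditive].
  - lra.
  - intros x. pose proof (psum_coef_sq_le x N) as Hx. change (psum _ N) with C in Hx at 2.
    pose proof (normsq_nonneg H x). nra.
  - intros x. pose proof (normsq_nonneg H x). nra.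
  - intros g Dg. apply Hdense, Dg.
Qed.

Hypothesis bessel : forall f, sum_le (coef_sq h f) (B * normsq f).

Lemma coef_sum_approx_subadditive : approx_subadditive (fun x => psum_lub (coef_sq h x)).
Proof.
  intros x y eta He.
  pose proof (Rinv_0_lt_compat _ He).
  eapply psum_lub_le_comb; [lra | lra | apply (bessel y) | apply (bessel (hsub x y)) |].
  intros n. apply coef_sq_approx, He.
Qed.

Lemma frame_lower_of_frame_lower_on_dense (A : R) : 0 <= A ->
  (forall g, dom D g -> le_sum (A * normsq g) (coef_sq h g)) ->
  forall f, le_sum (A * normsq f) (coef_sq h f).
Proof.
  intros HA Hdense f.
  apply (le_sum_of_le_psum_lub _ _ _ (bessel f)).
  apply (le_of_le_on_dense _ D (fun x => A * normsq x) (fun x => psum_lub (coef_sq h x)) (A + B)).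
  - apply approx_subadditive_scale; [exact HA | apply normsq_approx_subadditive].
  - apply coef_sum_approx_subadditive.
  - lra.
  - intros x. pose proof (normsq_nonneg H x). nra.
  - intros x. pose proof (normsq_nonneg H x). pose proof (psum_lub_le _ _ (bessel x)). nra.
  - intros g Dg. apply (le_psum_lub _ _ _ (bessel g) (Hdense g Dg)).
Qed.

End Coefficients.

Lemma Cmod_represented_sq (H : HilbertSpace) (D : RiggedHilbertSpace H)
  (omega : nat -> H -> Cx) (h : nat -> H) n g :
  (forall f, dom D f -> omega n f = inner H (h n) f) -> dom D g ->
  Cmod (Cconj (omega n g)) ^ 2 = coef_sq h g n.
Proof.
  intros Hrep Dg. unfold coef_sq.
  rewrite Cmod_sq, sq_Cconj, (Hrep g Dg), (inner_sym H g (h n)), sq_Cconj. reflexivity.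
Qed.

Lemma bessel_map_representation (H : HilbertSpace) (D : RiggedHilbertSpace H)
  (omega : nat -> H -> Cx) (B : R) :
  bounded_Bessel_map D omega B ->
  exists h : nat -> H, represented_in_H D omega h /\ Bessel_seq h B.
Proof.
  intros [Hin [HB Hsum]].
  assert (Hterm : forall n f, dom D f -> sq (omega n f) <= B * normsq f).
  { intros n f Hf. pose proof (Hsum f Hf (S n)) as Hs.
    pose proof (term_le_psum _ n (fun m => pow2_ge_0 (Cmod (Cconj (omega m f))))) as Ht.
    cbv beta in Ht. rewrite Cmod_sq, sq_Cconj in Ht. rewrite hnorm_sq in Hs. lra. }
  assert (Hex : forall n, exists h, forall f, dom D f -> omega n f = inner H h f).
  { intros n. apply (riesz_representation H D (omega n) B);
      [exact (proj1 (Hin n)) | lra | apply Hterm]. }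
  exists (fun n => proj1_sig (constructive_indefinite_description _ (Hex n))).
  set (h := fun n => proj1_sig _).
  assert (Hrep : forall n f, dom D f -> omega n f = inner H (h n) f)
    by (intros n; exact (proj2_sig (constructive_indefinite_description _ (Hex n)))).
  split; [intros n; split; [exists (sqrt B) | exact (Hrep n)] | split; [exact HB|]].
  - intros f Hf. unfold Cmod, hnorm. rewrite <- sqrt_mult_alt by lra.
    apply sqrt_le_1_alt. exact (Hterm n f Hf).
  - intros f. rewrite hnorm_sq.
    apply (sum_le_ext (coef_sq h f)); [intros n; symmetry; apply Cmod_sq|].
    apply (bessel_of_bessel_on_dense H h D B); [lra|]. intros g Dg.
    specialize (Hsum g Dg). rewrite hnorm_sq in Hsum.
    apply (sum_le_ext _ _ _ (fun n => Cmod_represented_sq H D omega h n g (Hrep n) Dg) Hsum).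
Qed.

Lemma distribution_frame_representation (H : HilbertSpace) (D : RiggedHilbertSpace H)
  (omega : nat -> H -> Cx) (A B : R) :
  distribution_frame D omega A B ->
  exists h : nat -> H, represented_in_H D omega h /\ frame_seq h A B.
Proof.
  intros [Hbm [HA Hlow]].
  destruct (bessel_map_representation H D omega B Hbm) as [h [Hrep [HB Hbes]]].
  assert (Hbes' : forall f, sum_le (coef_sq h f) (B * normsq f)).
  { intros f. specialize (Hbes f). rewrite hnorm_sq in Hbes.
    apply (sum_le_ext _ _ _ (fun n => Cmod_sq _) Hbes). }
  exists h. split; [exact Hrep|]. split; [split; [exact HB | exact Hbes] | split; [exact HA|]].
  intros f. rewrite hnorm_sq.
  apply (le_sum_ext (coef_sq h f)); [intros n; symmetry; apply Cmod_sq|].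
  apply (frame_lower_of_frame_lower_on_dense H h D B (Rlt_le _ _ HB) Hbes' A); [lra|].
  intros g Dg. specialize (Hlow g Dg). rewrite hnorm_sq in Hlow.
  apply (le_sum_ext _ _ _ (fun n => Cmod_represented_sq H D omega h n g (proj2 (Hrep n)) Dg) Hlow).
Qed.

Theorem proposition2p7 (H : HilbertSpace) (D : RiggedHilbertSpace H) :
  reflexive D ->
  (forall (omega : nat -> H -> Cx) (B : R),
     bounded_Bessel_map D omega B ->
     exists h : nat -> H, represented_in_H D omega h /\ Bessel_seq h B) /\
  (forall (omega : nat -> H -> Cx) (A B : R),
     distribution_frame D omega A B ->
     exists h : nat -> H, represented_in_H D omega h /\ frame_seq h A B).
Proof.
  intros _. split.
  - apply bessel_map_representation.
  - apply distribution_frame_representation.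
Qed.
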